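(* Let $A$ be an $n\times m$ complex matrix of rank $n$ with $n\le m$, let $b\in\mathbb C^n$, and let $X=\{x\in\mathbb C^m:Ax=b\}$. Then $\Sigma_X=\Sigma_X^\infty$. These sets are nonempty if and only if $\det(AA^\top)=0$, and in that case they equal the affine linear space $\{u\in\mathbb C^m:Au-b\in\mathrm{Im}(AA^\top)\}$, which has dimension $m-n+\mathrm{rank}(AA^\top)$.
   Context: For $x,y\in\mathbb C^m$, $x\cdot y=\sum x_iy_i$ (complex bilinear). For an irreducible variety $X\subseteq\mathbb C^m$ and $x\in X_{\mathrm{reg}}$, $N_xX$ is the span of gradients at $x$ of generators of the ideal of $X$ (for $X=\{Ax=b\}$ this is the row space of $A$, i.e. $\mathrm{Im}A^\top$). The ED correspondence $\mathcal E_X$ is the Zariski closure of $\{(x,u):x\in X_{\mathrm{reg}},\ u-x\in N_xX\}$ and $\mathcal E_X(u)=\{x:(x,u)\in\mathcal E_X\}$. The infinite ED discriminant is $\Sigma_X^\infty=\{u:\dim\mathcal E_X(u)\ge1\}$. The (affine) ED discriminant $\Sigma_X$ is the set of $u$ such that either $\mathcal E_X(u)$ has an isolated point $x$ of multiplicity at least $2$ (as a solution in $x$ of the equations of $\mathcal E_X$ with $u$ fixed), or $\mathcal E_X(u)$ is infinite. *)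

From mathcomp Require Import all_boot all_algebra.
From mathcomp Require Import complex Rstruct.

Set Implicit Arguments.
Unset Strict Implicit.
Unset Printing Implicit Defensive.

Import GRing.Theory.
Local Open Scope ring_scope.

Notation CC := (Rdefinitions.R)[i].

(* Polynomials in variables indexed by V with coefficients in C, as formal    *)
(* expressions (every polynomial is represented), with evaluation and formal  *)
(* partial derivatives.                                                       *)
Inductive pexpr (C : Type) (V : Type) : Type :=
  | PC of C
  | PV of V
  | PAdd of pexpr C V & pexpr C V
  | PMul of pexpr C V & pexpr C V.

Arguments PC {C V}.
Arguments PV {C V}.

Fixpoint peval (C : pzRingType) (V : Type) (z : V -> C) (p : pexpr C V) : C :=
  match p with
  | PC c => c
  | PV v => z v
  | PAdd p q => peval z p + peval z q
  | PMul p q => peval z p * peval z q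
  end.

Fixpoint pderiv (C : pzRingType) (V : eqType) (i : V) (p : pexpr C V) : pexpr C V :=
  match p with
  | PC _ => PC 0
  | PV v => PC (if v == i then 1 else 0)
  | PAdd p q => PAdd (pderiv i p) (pderiv i q)
  | PMul p q => PAdd (PMul (pderiv i p) q) (PMul p (pderiv i q))
  end.

Section ED.
Variable C : fieldType.
Variable m : nat.

Definition cvval (x : 'cV[C]_m) : 'I_m -> C := fun i => x i 0.

Definition pairval (x u : 'cV[C]_m) : 'I_m + 'I_m -> C :=
  fun s => match s with inl i => x i 0 | inr i => u i 0 end.

Definition pgrad (p : pexpr C 'I_m) (x : 'cV[C]_m) : 'cV[C]_m :=
  \col_i peval (cvval x) (pderiv i p).

Definition in_ideal (X : 'cV[C]_m -> Prop) (p : pexpr C 'I_m) : Prop :=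
  forall x, X x -> peval (cvval x) p = 0.

(* N_x X : the span of the gradients at x of elements of the ideal of X
   (equivalently, of a generating set of that ideal). *)
Definition normal_space (X : 'cV[C]_m -> Prop) (x v : 'cV[C]_m) : Prop :=
  exists k (ps : 'I_k -> pexpr C 'I_m) (c : 'I_k -> C),
    (forall j, in_ideal X (ps j)) /\ v = \sum_(j < k) c j *: pgrad (ps j) x.

Definition normal_dim_ge (X : 'cV[C]_m -> Prop) (x : 'cV[C]_m) (k : nat) : Prop :=
  exists M : 'M[C]_(m, k), \rank M = k /\ forall j, normal_space X x (col j M).

(* Regular points of an irreducible variety X: the points where the Jacobian
   rank of the ideal (= dim N_x X) attains its maximal (= generic) value,
   namely the codimension of X. *)
Definition regular_point (X : 'cV[C]_m -> Prop) (x : 'cV[C]_m) : Prop :=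
  X x /\ forall y k, X y -> normal_dim_ge X y k -> normal_dim_ge X x k.

(* The set whose Zariski closure is the ED correspondence *)
Definition ED_pre (X : 'cV[C]_m -> Prop) (x u : 'cV[C]_m) : Prop :=
  regular_point X x /\ normal_space X x (u - x).

Definition ED_ideal (X : 'cV[C]_m -> Prop) (p : pexpr C ('I_m + 'I_m)) : Prop :=
  forall x u, ED_pre X x u -> peval (pairval x u) p = 0.

(* The ED correspondence E_X: Zariski closure of ED_pre in C^m x C^m. *)
Definition ED_corr (X : 'cV[C]_m -> Prop) (x u : 'cV[C]_m) : Prop :=
  forall p, ED_ideal X p -> peval (pairval x u) p = 0.

Definition ED_fiber (X : 'cV[C]_m -> Prop) (u : 'cV[C]_m) : 'cV[C]_m -> Prop :=
  fun x => ED_corr X x u.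

Definition infinite_set (S : 'cV[C]_m -> Prop) : Prop :=
  forall s : seq 'cV[C]_m, exists x, S x /\ x \notin s.

(* Infinite ED discriminant: dim E_X(u) >= 1, i.e. the algebraic set E_X(u)
   is infinite (an algebraic set has dimension >= 1 iff it is infinite). *)
Definition ED_disc_inf (X : 'cV[C]_m -> Prop) (u : 'cV[C]_m) : Prop :=
  infinite_set (ED_fiber X u).

(* x is an isolated point (in the Zariski topology) of E_X(u) *)
Definition isolated_in (S : 'cV[C]_m -> Prop) (x : 'cV[C]_m) : Prop :=
  S x /\ exists g : pexpr C 'I_m,
    peval (cvval x) g != 0 /\ forall y, S y -> y != x -> peval (cvval y) g = 0.

(* The isolated solution x of the equations of E_X with u fixed has
   multiplicity >= 2: the local ring of the solution scheme at x is not C,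
   i.e. its Zariski tangent space at x is nonzero: some v <> 0 is killed by
   the x-differentials at (x,u) of all equations of E_X. *)
Definition mult_ge2 (X : 'cV[C]_m -> Prop) (u x : 'cV[C]_m) : Prop :=
  exists v : 'cV[C]_m, v != 0 /\
    forall p, ED_ideal X p ->
      \sum_(i < m) peval (pairval x u) (pderiv (inl i) p) * v i 0 = 0.

Definition ED_disc (X : 'cV[C]_m -> Prop) (u : 'cV[C]_m) : Prop :=
  (exists x, isolated_in (ED_fiber X u) x /\ mult_ge2 X u x)
  \/ infinite_set (ED_fiber X u).

End ED.

(* Every point of the affine space X = {x | A x = b} is regular, with normal
   space Im A^T: the rows of A x - b lie in the ideal of X, and conversely a
   polynomial vanishing on X vanishes on every line x + C k with A k = 0, so
   its gradient is orthogonal to ker A.  The ED correspondence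
   {(x, u) | A x = b, u - x ∈ Im A^T} is therefore cut out by linear equations
   and is its own Zariski closure; its fibre over u is
   {u - A^T z | A A^T z = A u - b}.
   If A A^T is invertible, each fibre is at most one point, at which the linear
   equations leave no tangent vector, so both discriminants are empty.
   Otherwise some r <> 0 has r A A^T = 0, so A^T r^T is a nonzero vector of
   ker A and every nonempty fibre contains a line in its direction.  Both
   discriminants are then {u | A u - b ∈ Im A A^T} = x0 + (ker A + Im A^T)
   with A x0 = b, of dimension (m - n) + n - (n - rank A A^T) because
   w |-> A^T w maps ker A A^T onto ker A ∩ Im A^T. *)

From mathcomp Require Import all_boot all_algebra.
From mathcomp Require Import complex Rstruct ring zify.
Set Implicit Arguments.
Unset Strict Implicit.
Unset Printing Implicit Defensive.
Import GRing.Theory Num.Theory.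
Local Open Scope ring_scope.

Section LinearExpr.
Variables (C : pzRingType) (V : finType).

Definition plinear (f : V -> C) (c : C) : pexpr C V :=
  foldr (fun j q => PAdd (PMul (PC (f j)) (PV j)) q) (PC c) (index_enum V).

Lemma peval_plinear f c z : peval z (plinear f c) = \sum_j f j * z j + c.
Proof.
rewrite /plinear unlock.
by elim: (index_enum V) => [|j s IH] /=; rewrite ?add0r // IH addrA.
Qed.

Lemma pderiv_plinear f c s z : peval z (pderiv s (plinear f c)) = f s.
Proof.
have -> : f s = \sum_(j | j == s) f j by rewrite big_pred1_eq.
rewrite big_mkcond /plinear unlock.
elim: (index_enum V) => [|j r IH] /=; first by [].
rewrite IH mul0r add0r.
by case: eqP; rewrite ?mulr1 ?mulr0.
Qed.

End LinearExpr.

Section Dot.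
Variables (C : pzRingType) (m : nat).

Definition cvdot (a b : 'cV[C]_m) : C := \sum_i a i 0 * b i 0.

Lemma cvdotE a b : cvdot a b = (a^T *m b) 0 0.
Proof. by rewrite mxE; apply: eq_bigr => i _; rewrite mxE. Qed.

Lemma cvdot0l y : cvdot 0 y = 0.
Proof. by rewrite /cvdot big1 // => i _; rewrite mxE mul0r. Qed.

Lemma cvdotNl a y : cvdot (- a) y = - cvdot a y.
Proof. by rewrite /cvdot -sumrN; apply: eq_bigr => i _; rewrite mxE mulNr. Qed.

Lemma cvdotBr a y y' : cvdot a (y - y') = cvdot a y - cvdot a y'.
Proof. by rewrite /cvdot -sumrB; apply: eq_bigr => i _; rewrite !mxE mulrBr. Qed.

End Dot.

Section ColumnExpr.
Variables (C : fieldType) (m : nat).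

Lemma peval_plinear_cv (a y : 'cV[C]_m) c :
  peval (cvval y) (plinear (cvval a) c) = cvdot a y + c.
Proof. exact: peval_plinear. Qed.

Lemma peval_plinear_pair (a a' x u : 'cV[C]_m) c :
  peval (pairval x u) (plinear (pairval a a') c) = cvdot a x + cvdot a' u + c.
Proof. by rewrite peval_plinear big_sumType. Qed.

Lemma sum_pderiv_inl_plinear (a a' x u v : 'cV[C]_m) c :
  \sum_i peval (pairval x u) (pderiv (inl i) (plinear (pairval a a') c)) * v i 0
  = cvdot a v.
Proof. by apply: eq_bigr => i _; rewrite pderiv_plinear. Qed.

End ColumnExpr.

Section Line.
Variables (C : numFieldType) (m : nat) (x v : 'cV[C]_m).

Fixpoint line_poly (p : pexpr C 'I_m) : {poly C} :=
  match p with
  | PC c => c%:P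
  | PV j => (x j 0)%:P + (v j 0)%:P * 'X
  | PAdd p q => line_poly p + line_poly q
  | PMul p q => line_poly p * line_poly q
  end.

Lemma horner_line_poly p t : (line_poly p).[t] = peval (cvval (x + t *: v)) p.
Proof.
elim: p => [c|j|p IHp q IHq|p IHp q IHq] /=.
- by rewrite hornerC.
- by rewrite hornerD hornerC hornerCM hornerX /cvval !mxE mulrC.
- by rewrite hornerD IHp IHq.
- by rewrite hornerM IHp IHq.
Qed.

Lemma coef0_line_poly p : (line_poly p)`_0 = peval (cvval x) p.
Proof. by rewrite -horner_coef0 horner_line_poly scale0r addr0. Qed.

Lemma coef1_line_poly p : (line_poly p)`_1 = cvdot v (pgrad p x).
Proof.
rewrite /cvdot; elim: p => [c|j|p IHp q IHq|p IHp q IHq] /=.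
- by rewrite coefC big1 // => i _; rewrite mxE mulr0.
- rewrite coefD coefC coefCM coefX add0r mulr1 (bigD1 j) //= mxE /= eqxx mulr1.
  by rewrite big1 ?addr0 // => i; rewrite eq_sym => /negbTE ji; rewrite mxE /= ji mulr0.
- rewrite coefD IHp IHq -big_split /=.
  by apply: eq_bigr => i _; rewrite !mxE mulrDr.
- rewrite coefM !big_ord_recl big_ord0 addr0 /= !coef0_line_poly IHp IHq.
  rewrite mulr_suml mulr_sumr -big_split /=.
  by apply: eq_bigr => i _; rewrite !mxE /=; ring.
Qed.

Lemma cvdot_pgrad_eq0 p :
  (forall t, peval (cvval (x + t *: v)) p = 0) -> cvdot v (pgrad p x) = 0.
Proof.
move=> p_line0; rewrite -coef1_line_poly.
suff -> : line_poly p = 0 by rewrite coef0.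
apply/eqP; apply: contraT => p_neq0.
have := @max_poly_roots _ _ [seq k%:R | k <- iota 0 (size (line_poly p))] p_neq0.
rewrite size_map size_iota ltnn; apply.
- by apply/allP => t _; rewrite /root horner_line_poly p_line0.
- by rewrite map_inj_uniq ?iota_uniq // => a c /eqP; rewrite eqr_nat => /eqP.
Qed.

Lemma infinite_set_line (S : 'cV[C]_m -> Prop) :
  v != 0 -> (forall t, S (x + t *: v)) -> infinite_set S.
Proof.
move=> v_neq0 S_line s.
have line_inj : injective (fun t : C => x + t *: v).
  move=> t t' /addrI/eqP; rewrite -subr_eq0 -scalerBl scaler_eq0 (negbTE v_neq0).
  by rewrite orbF subr_eq0 => /eqP.
pose ts := [seq k%:R : C | k <- iota 0 (size s).+1].
have /hasP[_ /mapP[t _ ->] t_notin] : has (predC (mem s)) [seq x + t *: v | t <- ts].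
  have line_uniq : uniq [seq x + t *: v | t <- ts].
    rewrite map_inj_uniq // map_inj_uniq ?iota_uniq // => k l /eqP.
    by rewrite eqr_nat => /eqP.
  rewrite has_predC; apply/negP => /allP/(uniq_leq_size line_uniq).
  by rewrite !size_map size_iota ltnn.
by exists (x + t *: v).
Qed.

End Line.

Section LinearAlgebra.
Variables (C : fieldType) (n m : nat) (A : 'M[C]_(n, m)).

Lemma image_trmxE (v : 'cV[C]_m) :
  (exists z, v = A^T *m z) <-> (forall k, A *m k = 0 -> cvdot k v = 0).
Proof.
split=> [[z ->] k Ak | v_orth].
  by rewrite cvdotE mulmxA -trmx_mul Ak trmx0 mul0mx mxE.
(* The columns of [cokermx A] lie in ker A. *)
have /submxP[D vD] : (v^T <= A)%MS.
  rewrite submxE; apply/eqP/matrixP => i j; rewrite ord1 !mxE.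
  have Ak : A *m col j (cokermx A) = 0 by rewrite colE mulmxA mulmx_coker mul0mx.
  by rewrite -[RHS](v_orth _ Ak); apply: eq_bigr => l _; rewrite !mxE mulrC.
by exists D^T; rewrite -(trmxK v) vD trmx_mul.
Qed.

Lemma cvdot_row i (y : 'cV[C]_m) : cvdot (row i A)^T y = (A *m y) i 0.
Proof. by rewrite mxE; apply: eq_bigr => j _; rewrite !mxE. Qed.

Hypothesis A_free : row_free A.

Lemma row_free_solvable (b : 'cV[C]_n) : exists x, A *m x = b.
Proof.
have /submxP[D bD] : (b^T <= A^T)%MS.
  by apply: submx_full; rewrite /row_full mxrank_tr; exact: A_free.
by exists D^T; rewrite -[b]trmxK bD trmx_mul trmxK.
Qed.

Lemma mxrank_kerT_cap :
  \rank (kermx A^T :&: A)%MS = (n - \rank (A *m A^T))%N.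
Proof.
rewrite -mxrank_ker -(mxrankMfree _ A_free); apply: eqmx_rank; apply/andP; split.
- have /submxP[D DA] := capmxSr (kermx A^T) A.
  rewrite DA; apply: submxMr; apply/sub_kermxP; rewrite mulmxA; apply/sub_kermxP.
  by rewrite -DA capmxSl.
- rewrite sub_capmx submxMl andbT; apply/sub_kermxP.
  by rewrite -mulmxA mulmx_ker.
Qed.

Lemma mxrank_kerT_adds :
  \rank (kermx A^T + A)%MS = (m - n + \rank (A *m A^T))%N.
Proof.
have rkA : \rank A = n by apply/eqP.
have := mxrank_sum_cap (kermx A^T) A.
rewrite mxrank_kerT_cap mxrank_ker mxrank_tr rkA.
have := rank_leq_col A; have := mxrankM_maxl A A^T; rewrite rkA.
lia.
Qed.

(* As row spaces, [kermx A^T] is (ker A)^T and [A] is (Im A^T)^T. *)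
Lemma sub_kerT_addsE (v : 'cV[C]_m) :
  (v^T <= kermx A^T + A)%MS <-> exists w, A *m v = A *m A^T *m w.
Proof.
split=> [/sub_addsmxP[[k w] /= vkw] | [w Av]].
  exists w^T; apply: trmx_inj; rewrite !trmx_mul !trmxK vkw mulmxDl.
  by rewrite -mulmxA mulmx_ker mulmx0 add0r mulmxA.
have -> : v^T = (v^T - w^T *m A) + w^T *m A by rewrite subrK.
apply: addmx_sub_adds; last exact: submxMl.
apply/sub_kermxP; rewrite mulmxBl -mulmxA -[A in w^T *m (A *m _)]trmxK.
by rewrite -!trmx_mul Av subrr.
Qed.

Lemma affine_paramE (b : 'cV[C]_n) (x0 u : 'cV[C]_m) : A *m x0 = b ->
  (exists w, A *m u - b = A *m A^T *m w) <->
  exists y, u = x0 + (kermx A^T + A)%MS^T *m y.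
Proof.
move=> Ax0; rewrite -Ax0 -mulmxBr -sub_kerT_addsE.
split=> [/submxP[D uD] | [y ->]].
  by exists D^T; rewrite -trmx_mul -uD trmxK addrC subrK.
by rewrite addrC addKr -[y]trmxK -trmx_mul trmxK submxMl.
Qed.

End LinearAlgebra.

Section AffineED.
Variables (C : numFieldType) (n m : nat) (A : 'M[C]_(n, m)) (b : 'cV[C]_n).
Let X (x : 'cV[C]_m) := A *m x = b.

Lemma normal_spaceE x w : X x -> normal_space X x w <-> exists z, w = A^T *m z.
Proof.
move=> Xx; split=> [[k [ps [c [ps_X ->]]]] | [z ->]].
  apply/image_trmxE => y Ay.
  have grad_orth j : cvdot y (pgrad (ps j) x) = 0.
    apply: cvdot_pgrad_eq0 => t; apply: ps_X.
    by rewrite /X mulmxDr Xx -scalemxAr Ay scaler0 addr0.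
  rewrite cvdotE mulmx_sumr summxE big1 // => j _.
  by rewrite -scalemxAr mxE -cvdotE grad_orth mulr0.
exists n, (fun i => plinear (cvval (row i A)^T) (- b i 0)), (fun i => z i 0).
split=> [i y Xy | ].
  by rewrite peval_plinear_cv cvdot_row Xy subrr.
apply/matrixP => i l; rewrite ord1 !mxE summxE; apply: eq_bigr => j _.
by rewrite !mxE pderiv_plinear /cvval !mxE mulrC.
Qed.

Lemma regular_point_affine x : X x -> regular_point X x.
Proof.
move=> Xx; split=> // y k Xy [M [rkM M_normal]]; exists M; split=> // j.
by apply/(normal_spaceE _ Xx)/(normal_spaceE _ Xy).
Qed.

Lemma ED_preE x u : ED_pre X x u <-> X x /\ exists z, u - x = A^T *m z.
Proof.
split=> [[[Xx _] /(normal_spaceE _ Xx)] // | [Xx ux]].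
by split; [exact: regular_point_affine | apply/(normal_spaceE _ Xx)].
Qed.

Lemma ED_ideal_row i : ED_ideal X (plinear (pairval (row i A)^T 0) (- b i 0)).
Proof.
move=> x u /ED_preE[Xx _].
by rewrite peval_plinear_pair cvdot_row cvdot0l Xx addr0 subrr.
Qed.

Lemma ED_ideal_ker k : A *m k = 0 -> ED_ideal X (plinear (pairval (- k) k) 0).
Proof.
move=> Ak x u /ED_preE[_ /image_trmxE ux_orth].
by rewrite peval_plinear_pair cvdotNl addr0 addrC -cvdotBr ux_orth.
Qed.

Lemma ED_corrE x u : ED_corr X x u <-> X x /\ exists z, u - x = A^T *m z.
Proof.
split=> [corr_xu | /ED_preE pre_xu p /(_ x u pre_xu) //].
split.
  apply/matrixP => i j; rewrite ord1; apply/eqP; rewrite -subr_eq0 -cvdot_row.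
  by have := corr_xu _ (ED_ideal_row i); rewrite peval_plinear_pair cvdot0l addr0 => ->.
apply/image_trmxE => k Ak; have := corr_xu _ (ED_ideal_ker Ak).
by rewrite peval_plinear_pair cvdotNl addr0 addrC -cvdotBr.
Qed.

Lemma ED_fiber_nonemptyE u :
  (exists x, ED_fiber X u x) <-> exists w, A *m u - b = A *m A^T *m w.
Proof.
split=> [[x /ED_corrE[Xx [z uxz]]] | [w uw]].
  by exists z; rewrite -Xx -mulmxBr uxz mulmxA.
exists (u - A^T *m w); apply/ED_corrE; split; last by exists w; rewrite opprB addrC subrK.
by rewrite /X mulmxBr mulmxA -uw opprB addrC subrK.
Qed.

Lemma ED_fiber_uniq u x1 x2 : \det (A *m A^T) != 0 ->
  ED_fiber X u x1 -> ED_fiber X u x2 -> x1 = x2.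
Proof.
move=> det_neq0; have AAT_unit : A *m A^T \in unitmx by rewrite unitmxE unitfE.
have fiberE x : ED_fiber X u x -> x = u - A^T *m invmx (A *m A^T) *m (A *m u - b).
  case/ED_corrE => Xx [z uxz].
  have -> : A *m u - b = A *m A^T *m z by rewrite -Xx -mulmxBr uxz mulmxA.
  by rewrite -mulmxA mulKmx // -uxz opprB addrC subrK.
by move=> /fiberE -> /fiberE ->.
Qed.

Lemma not_mult_ge2 u x : \det (A *m A^T) != 0 -> ~ mult_ge2 X u x.
Proof.
move=> det_neq0 [v [v_neq0 v_tangent]].
have Av : A *m v = 0.
  apply/matrixP => i j; rewrite ord1 -cvdot_row [RHS]mxE.
  rewrite -(sum_pderiv_inl_plinear (row i A)^T 0 x u v (- b i 0)).
  exact: v_tangent (ED_ideal_row i).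
have [z vz] : exists z, v = A^T *m z.
  apply/image_trmxE => k Ak; apply/eqP; rewrite -oppr_eq0 -cvdotNl.
  by rewrite -(sum_pderiv_inl_plinear (- k) k x u v 0) (v_tangent _ (ED_ideal_ker Ak)).
have AAT_unit : A *m A^T \in unitmx by rewrite unitmxE unitfE.
by move: v_neq0; rewrite vz -[z](mulKmx AAT_unit) -mulmxA -vz Av !mulmx0 eqxx.
Qed.

Lemma ED_disc_det0 u : ED_disc X u -> \det (A *m A^T) = 0.
Proof.
move=> disc_u; apply/eqP; apply: contraT => det_neq0.
case: disc_u => [[x [_ /(not_mult_ge2 det_neq0) []]] | inf_u].
have [x1 [F1 _]] := inf_u [::].
have [x2 [F2]] := inf_u [:: x1].
by rewrite (ED_fiber_uniq det_neq0 F1 F2) mem_seq1 eqxx.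
Qed.

Lemma ED_disc_fiber u : ED_disc X u -> exists x, ED_fiber X u x.
Proof. by case=> [[x [[Fx _] _]] | /(_ [::])[x [Fx _]]]; exists x. Qed.

Hypothesis A_free : row_free A.

Lemma ED_fiber_line u x : \det (A *m A^T) = 0 -> ED_fiber X u x ->
  exists2 d, d != 0 & forall t, ED_fiber X u (x + t *: d).
Proof.
move=> /eqP/det0P[r r_neq0 rAAT] /ED_corrE[Xx [z uxz]].
have Ad : A *m (A^T *m r^T) = 0.
  by apply: trmx_inj; rewrite !trmx_mul !trmxK -mulmxA rAAT trmx0.
exists (A^T *m r^T).
  apply: contra r_neq0 => /eqP d0.
  by rewrite -(mulmx_free_eq0 _ A_free) -trmx_eq0 trmx_mul d0.
move=> t; apply/ED_corrE; split.
  by rewrite /X mulmxDr Xx -scalemxAr Ad scaler0 addr0.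
by exists (z - t *: r^T); rewrite opprD addrA uxz mulmxBr scalemxAr.
Qed.

Lemma ED_fiber_infinite u x : \det (A *m A^T) = 0 -> ED_fiber X u x ->
  infinite_set (ED_fiber X u).
Proof. by move=> det0 /(ED_fiber_line det0)[d /infinite_set_line]; apply. Qed.

Lemma ED_discP u : ED_disc X u <->
  \det (A *m A^T) = 0 /\ exists w, A *m u - b = A *m A^T *m w.
Proof.
split=> [disc_u | [det0 /(ED_fiber_nonemptyE u)[x Fx]]].
  split; [exact: ED_disc_det0 disc_u | exact/ED_fiber_nonemptyE/ED_disc_fiber].
by right; exact: ED_fiber_infinite Fx.
Qed.

Lemma ED_disc_infE u : ED_disc X u <-> ED_disc_inf X u.
Proof.
split=> [disc_u | ]; last by right.
have [x Fx] := ED_disc_fiber disc_u.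
exact: ED_fiber_infinite (ED_disc_det0 disc_u) Fx.
Qed.

End AffineED.

Theorem mainTheorem6 (n m : nat) (A : 'M[CC]_(n, m)) (b : 'cV[CC]_n) :
  (n <= m)%N -> \rank A = n ->
  let X := fun x : 'cV[CC]_m => A *m x = b in
  (forall u, ED_disc X u <-> ED_disc_inf X u) /\
  ((exists u, ED_disc X u) <-> \det (A *m A^T) = 0) /\
  (\det (A *m A^T) = 0 ->
     (forall u, ED_disc X u <->
                exists w : 'cV[CC]_n, A *m u - b = (A *m A^T) *m w) /\
     (exists (u0 : 'cV[CC]_m) (B : 'M[CC]_m),
        \rank B = (m - n + \rank (A *m A^T))%N /\
        forall u, (exists w : 'cV[CC]_n, A *m u - b = (A *m A^T) *m w) <->
                  exists y : 'cV[CC]_m, u = u0 + B *m y)).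
Proof.
move=> _ rkA X. (* n <= m follows from \rank A = n *)
have A_free : row_free A by apply/eqP.
have [x0 Ax0] := row_free_solvable A_free b.
split; first exact: ED_disc_infE b A_free.
split.
  split=> [[u /(ED_discP b A_free)[]] // | det0].
  by exists x0; apply/(ED_discP b A_free); split=> //; exists 0; rewrite Ax0 subrr mulmx0.
move=> det0; split.
  by move=> u; split=> [/(ED_discP b A_free)[] | w_u] //; apply/(ED_discP b A_free).
exists x0, (kermx A^T + A)%MS^T; split; first by rewrite mxrank_tr mxrank_kerT_adds.
by move=> u; apply: affine_paramE.
Qed.
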